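(* Let $(\bm{W}_0,\bm{D}_0,f_{0,j}:j=1,\ldots,p)$ and $(\bm{W}_1,\bm{D}_1,f_{1,j}:j=1,\ldots,p)$ be two parameter values of the model in the context that lead to the same distribution of $(\bm{Y}_t:t=1,\ldots,T)$ for every $T=1,2,\ldots$, where all diagonal entries of $\bm{W}_1$ are zero and $\bm{W}_0$ is strictly lower triangular. If, for each $k=0,1$, the set of functions $\{f_{k,j}:j=1,\ldots,p\}$ is linearly independent, then $\bm{W}_0=\bm{W}_1$, $\bm{D}_0=\bm{D}_1$, and $f_{0,j}=f_{1,j}$ for all $j=1,\ldots,p$.
   Context: Model: a $p$-dimensional time series $(\bm{Y}_t)$ satisfies $\bm{Y}_t-\bm{W}\bm{Y}_t=\bm{D}^{1/2}\bm{Z}_t$, where $\bm{W}$ is a $p\times p$ matrix with $\bm{I}-\bm{W}$ invertible, $\bm{D}$ is a diagonal matrix with positive diagonal entries, and $(\bm{Z}_t)$ is a zero-mean stationary Gaussian process whose $p$ components are mutually independent univariate stationary series with unit variance and continuous spectral densities $f_1,\ldots,f_p$ on $[-\pi,\pi]$, where $f_j(\omega)=\gamma_j(0)+2\sum_{h\ge1}\gamma_j(h)\cos(h\omega)$ with $\gamma_j$ the autocovariance function of the $j$th component. *)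

From HB Require Import structures.
From mathcomp Require Import all_boot all_order all_algebra.
From mathcomp Require Import all_classical all_reals all_analysis.
Set Implicit Arguments. Unset Strict Implicit. Unset Printing Implicit Defensive.
Import Order.TTheory GRing.Theory Num.Theory.
Import numFieldNormedType.Exports.
Local Open Scope classical_set_scope.
Local Open Scope ring_scope.

Section Model.
Variables (R : realType) (p : nat).

Definition lag (s t : nat) : nat := (maxn s t - minn s t)%N.

(* g is the autocovariance function (at lags h >= 0) of a univariate
   stationary series with unit variance *)
Definition is_unit_autocov (g : nat -> R) : Prop :=
  g 0%N = 1 /\
  forall (n : nat) (c : 'I_n -> R),
    0 <= \sum_(s < n) \sum_(t < n) c s * c t * g (lag s t).

Definition is_cont_specdens (g : nat -> R) (f : R -> R) : Prop :=
  (forall w : R, - pi <= w <= pi ->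
     (fun n : nat => g 0%N + 2 * \sum_(1 <= h < n.+1) g h * cos (h%:R * w))
       @ \oo --> f w) /\
  {within `[- pi, pi], continuous f}.

(* Parameter (W, D = diag d, f_j) of the model, with autocovariances g_j of
   the components of Z. *)
Definition model_param (W : 'M[R]_p) (d : 'rV[R]_p)
    (g : 'I_p -> nat -> R) (f : 'I_p -> R -> R) : Prop :=
  (1%:M - W) \in unitmx /\
  (forall i, 0 < d 0 i) /\
  (forall j, is_unit_autocov (g j) /\ is_cont_specdens (g j) (f j)).

(* Cov(Y_s, Y_t) where Y_t = (I - W)^{-1} D^{1/2} Z_t and
   Cov(Z_s, Z_t) = diag(g_j(|s-t|)). *)
Definition covY (W : 'M[R]_p) (d : 'rV[R]_p) (g : 'I_p -> nat -> R)
    (h : nat) : 'M[R]_p :=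
  let A := invmx (1%:M - W) *m diag_mx (map_mx Num.sqrt d) in
  A *m diag_mx (\row_j g j h) *m A^T.

(* (Y_1, ..., Y_T) is zero-mean Gaussian, so its law is determined by (and
   determines) the block covariance matrix (Cov(Y_s,Y_t))_{s,t<T}. *)
Definition same_law_Y (W0 : 'M[R]_p) (d0 : 'rV[R]_p) (g0 : 'I_p -> nat -> R)
    (W1 : 'M[R]_p) (d1 : 'rV[R]_p) (g1 : 'I_p -> nat -> R) : Prop :=
  forall (T : nat) (s t : 'I_T),
    covY W0 d0 g0 (lag s t) = covY W1 d1 g1 (lag s t).

Definition strictly_lower (W : 'M[R]_p) : Prop :=
  forall i j : 'I_p, (i <= j)%N -> W i j = 0.

Definition zero_diag (W : 'M[R]_p) : Prop := forall i : 'I_p, W i i = 0.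

Definition lin_indep_on_circle (f : 'I_p -> R -> R) : Prop :=
  forall a : 'I_p -> R,
    (forall w : R, - pi <= w <= pi -> \sum_(j < p) a j * f j w = 0) ->
    forall j, a j = 0.

End Model.

(** Write [A_k = (I - W_k)^-1 D_k^(1/2)] and [B_k = D_k^(-1/2) (I - W_k) = A_k^-1],
    so that [Cov(Y_t, Y_(t+h)) = A_k G_k(h) A_k^T] with [G_k(h) = diag (g_(k,j)(h))].
    Equality of the laws gives [G_1(h) = M G_0(h) M^T] for [M = B_1 A_0] and all [h].
    Off the diagonal this reads [sum_j M_aj M_bj g_(0,j) = 0] for [a <> b]; the
    autocovariances inherit the linear independence of their spectral densities, so
    every column of [M] has at most one nonzero entry.  Since [M B_0 = B_1] with [B_0]
    lower triangular and [B_1] of positive diagonal, row [a] of [M] has a nonzero entry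
    in some column [j >= a], and descending induction on [a] forces [j = a]: [M] is
    diagonal.  On the diagonal, [h = 0] gives [M_aa^2 = 1] while
    [M_aa (B_0)_aa = (B_1)_aa] makes [M_aa] positive, so [M = I].  Hence [B_0 = B_1] and [G_0 = G_1], from which
    [W], [D] and the spectral densities are read off. *)

From HB Require Import structures.
From mathcomp Require Import all_boot all_order all_algebra.
From mathcomp Require Import all_classical all_reals all_analysis.
Import Order.TTheory GRing.Theory Num.Theory.
Import numFieldNormedType.Exports.

Set Implicit Arguments.
Unset Strict Implicit.
Unset Printing Implicit Defensive.

Local Open Scope classical_set_scope.
Local Open Scope ring_scope.

Section CosineSeries.
Variable R : realType.
Implicit Types (g : nat -> R) (f : R -> R) (w : R).

Definition cos_partial_sum (g : nat -> R) (w : R) (n : nat) : R :=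
  g 0%N + 2 * \sum_(1 <= h < n.+1) g h * cos (h%:R * w).

Lemma cos_partial_sum_lin (I : finType) (c : I -> R) (g : I -> nat -> R) w n :
  cos_partial_sum (fun h => \sum_i c i * g i h) w n =
  \sum_i c i * cos_partial_sum (g i) w n.
Proof.
rewrite /cos_partial_sum; under [RHS]eq_bigr do rewrite mulrDr.
rewrite big_split /=; congr (_ + _).
under [RHS]eq_bigr do rewrite mulrCA mulr_sumr.
rewrite -mulr_sumr exchange_big; congr (_ * _); apply: eq_bigr => h _.
by rewrite mulr_suml; apply: eq_bigr => i _; rewrite mulrA.
Qed.

Lemma cos_partial_sum0 w : cos_partial_sum (fun=> 0) w = fun=> 0.
Proof.
by apply: funext => n; rewrite /cos_partial_sum big1 ?mulr0 ?addr0 // => h; rewrite mul0r.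
Qed.

Lemma specdens_cvg g f w : is_cont_specdens g f -> - pi <= w <= pi ->
  cos_partial_sum g w @ \oo --> f w.
Proof. by case=> gf _; apply: gf. Qed.

Lemma specdens_unique g f f' w : is_cont_specdens g f -> is_cont_specdens g f' ->
  - pi <= w <= pi -> f w = f' w.
Proof.
move=> gf gf' w_in.
exact: (cvg_unique (@Rhausdorff R) (specdens_cvg gf w_in) (specdens_cvg gf' w_in)).
Qed.

Lemma autocov_lin_indep p (g : 'I_p -> nat -> R) (f : 'I_p -> R -> R) :
  (forall j, is_cont_specdens (g j) (f j)) -> lin_indep_on_circle f ->
  forall c : 'I_p -> R, (forall h, \sum_j c j * g j h = 0) -> forall j, c j = 0.
Proof.
move=> gf f_indep c cg0; apply: f_indep => w w_in.
have : cos_partial_sum (fun h => \sum_j c j * g j h) w @ \oo --> \sum_j c j * f j w.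
  rewrite (funext (cos_partial_sum_lin c g w)).
  apply: (@cvg_big _ _ +%R 0 xpredT) => [|j _]; first exact: add_continuous.
  by apply: cvgM; [exact: cvg_cst | exact: specdens_cvg].
rewrite (funext cg0) cos_partial_sum0 => cvg0.
exact: (cvg_unique (@Rhausdorff R) cvg0 (cvg_cst 0)).
Qed.

End CosineSeries.

Lemma congr_diag_mxE (R : comPzRingType) n (M : 'M[R]_n) (r : 'rV[R]_n) a b :
  (M *m diag_mx r *m M^T) a b = \sum_j M a j * M b j * r 0 j.
Proof. by rewrite mul_mx_diag !mxE; apply: eq_bigr => j _; rewrite !mxE mulrAC. Qed.

Lemma congr_transfer (R : comPzRingType) n (A0 A1 B1 G0 G1 : 'M[R]_n) :
  B1 *m A1 = 1%:M -> A0 *m G0 *m A0^T = A1 *m G1 *m A1^T ->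
  G1 = (B1 *m A0) *m G0 *m (B1 *m A0)^T.
Proof.
move=> B1A1 eqA.
have -> : B1 *m A0 *m G0 *m (B1 *m A0)^T = B1 *m (A0 *m G0 *m A0^T) *m B1^T.
  by rewrite trmx_mul !mulmxA.
by rewrite eqA !mulmxA B1A1 mul1mx -mulmxA -trmx_mul B1A1 trmx1 mulmx1.
Qed.

Section ColumnDisjoint.
Variables (R : idomainType) (n : nat) (M B0 : 'M[R]_n).
Implicit Types a b j : 'I_n.
Hypothesis col_disjoint : forall a b j, a != b -> M a j * M b j = 0.
Hypothesis B0_trig : is_trig_mx B0.
Hypothesis MB0_diag : forall a, (M *m B0) a a != 0.

Lemma col_disjoint_supp_ge a : exists2 j : 'I_n, (a <= j)%N & M a j != 0.
Proof.
move: (MB0_diag a); rewrite mxE; apply: contraNP => no_supp.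
apply/eqP/big1 => j _; have [le_aj | lt_ja] := leqP a j.
  by have [->|Maj] := eqVneq (M a j) 0; [rewrite mul0r | case: no_supp; exists j].
by move/is_trig_mxP: B0_trig => /(_ j a lt_ja) ->; rewrite mulr0.
Qed.

Lemma col_disjoint_diag_neq0 a : M a a != 0.
Proof.
have [k] := ubnP (n - a); elim: k a => // k IHk a lt_na.
have [j le_aj Maj] := col_disjoint_supp_ge a.
have [eq_aj | neq_aj] := eqVneq a j; first by rewrite -eq_aj in Maj.
have lt_aj : (a < j)%N by rewrite ltn_neqAle val_eqE neq_aj.
have Mjj : M j j != 0.
  apply: IHk; rewrite -ltnS in lt_na.
  exact: leq_trans (ltn_sub2l (ltn_ord a) lt_aj) lt_na.
by move/eqP: (col_disjoint j neq_aj); rewrite mulf_eq0 (negPf Maj) (negPf Mjj).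
Qed.

Lemma col_disjoint_is_diag : is_diag_mx M.
Proof.
apply/is_diag_mxP => a b; rewrite val_eqE => neq_ab.
move/eqP: (col_disjoint b neq_ab).
by rewrite mulf_eq0 (negPf (col_disjoint_diag_neq0 b)) orbF => /eqP.
Qed.

End ColumnDisjoint.

Lemma pos_diag_congr_id (R : realDomainType) n (m r : 'rV[R]_n) :
  (forall a, 0 < m 0 a) -> (forall a, r 0 a != 0) ->
  diag_mx r = diag_mx m *m diag_mx r *m (diag_mx m)^T -> diag_mx m = 1%:M.
Proof.
move=> m_gt0 r_neq0 congr_r; rewrite -diag_const_mx; congr diag_mx.
apply/rowP => a; move/matrixP: congr_r => /(_ a a).
rewrite tr_diag_mx mul_mx_diag mul_diag_mx !mxE eqxx mulr1n mulrAC -expr2.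
rewrite -[X in X = _]mul1r => /(mulIf (r_neq0 a)) /esym /eqP.
rewrite sqrf_eq1 => /orP[/eqP // | /eqP m_eqN1].
by move: (m_gt0 a); rewrite m_eqN1 oppr_gt0 ltr10.
Qed.

Section Model.
Variables (R : realType) (p : nat).
Implicit Types (W : 'M[R]_p) (d : 'rV[R]_p).

Definition mix_mx W d := invmx (1%:M - W) *m diag_mx (map_mx Num.sqrt d).

Definition unmix_mx W d := diag_mx (map_mx (fun x => (Num.sqrt x)^-1) d) *m (1%:M - W).

Lemma covYE W d g h :
  covY W d g h = mix_mx W d *m diag_mx (\row_j g j h) *m (mix_mx W d)^T.
Proof. by []. Qed.

Lemma unmix_mxE W d a b :
  unmix_mx W d a b = (Num.sqrt (d 0 a))^-1 * ((a == b)%:R - W a b).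
Proof. by rewrite /unmix_mx mul_diag_mx !mxE. Qed.

Lemma unmix_mixK W d : (1%:M - W) \in unitmx -> (forall i, 0 < d 0 i) ->
  unmix_mx W d *m mix_mx W d = 1%:M.
Proof.
move=> IW_unit d_gt0; rewrite /unmix_mx /mix_mx mulmxA -(mulmxA _ (1%:M - W)).
rewrite mulmxV // mulmx1; apply/matrixP => a b; rewrite mul_diag_mx !mxE.
by have [->|] := eqVneq a b; rewrite ?mulr0 // !mulr1n mulVf // gt_eqF // sqrtr_gt0.
Qed.

Lemma unmix_mx_diag W d a : zero_diag W -> unmix_mx W d a a = (Num.sqrt (d 0 a))^-1.
Proof. by move=> W_diag; rewrite unmix_mxE eqxx W_diag subr0 mulr1. Qed.

Lemma unmix_mx_diag_gt0 W d a : zero_diag W -> (forall i, 0 < d 0 i) ->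
  0 < unmix_mx W d a a.
Proof. by move=> W_diag d_gt0; rewrite unmix_mx_diag // invr_gt0 sqrtr_gt0. Qed.

Lemma strictly_lower_zero_diag W : strictly_lower W -> zero_diag W.
Proof. by move=> W_lower a; apply: W_lower. Qed.

Lemma strictly_lower_unmix_trig W d : strictly_lower W -> is_trig_mx (unmix_mx W d).
Proof.
move=> W_lower; apply/is_trig_mxP => a b lt_ab.
by rewrite unmix_mxE -val_eqE (ltn_eqF lt_ab) W_lower ?(ltnW lt_ab) // subr0 mulr0.
Qed.

Lemma unmix_mx_inj W0 d0 W1 d1 : zero_diag W0 -> zero_diag W1 ->
  (forall i, 0 < d0 0 i) -> (forall i, 0 < d1 0 i) ->
  unmix_mx W0 d0 = unmix_mx W1 d1 -> W0 = W1 /\ d0 = d1.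
Proof.
move=> W0_diag W1_diag d0_gt0 d1_gt0 /matrixP eqB.
have d01 : d0 = d1.
  apply/rowP => a; move: (eqB a a); rewrite !unmix_mx_diag // => /invr_inj sqrt_eq.
  by rewrite -(sqr_sqrtr (ltW (d0_gt0 a))) -(sqr_sqrtr (ltW (d1_gt0 a))) sqrt_eq.
split=> //; apply/matrixP => a b; move: (eqB a b); rewrite !unmix_mxE d01.
have isqrt_neq0 : (Num.sqrt (d1 0 a))^-1 != 0 by rewrite invr_eq0 gt_eqF // sqrtr_gt0.
by move=> /(mulfI isqrt_neq0) /addrI /oppr_inj.
Qed.

Lemma same_law_covY W0 d0 g0 W1 d1 g1 : same_law_Y W0 d0 g0 W1 d1 g1 ->
  forall h, covY W0 d0 g0 h = covY W1 d1 g1 h.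
Proof.
by move=> law h; have := law h.+1 ord0 ord_max; rewrite /lag max0n min0n subn0.
Qed.

Lemma congr_autocov_col_disjoint (M : 'M[R]_p) (g0 g1 : 'I_p -> nat -> R)
    (f0 : 'I_p -> R -> R) :
  (forall j, is_cont_specdens (g0 j) (f0 j)) -> lin_indep_on_circle f0 ->
  (forall h, diag_mx (\row_j g1 j h) = M *m diag_mx (\row_j g0 j h) *m M^T) ->
  forall a b j, a != b -> M a j * M b j = 0.
Proof.
move=> g0f0 f0_indep congrM a b j neq_ab.
apply: (autocov_lin_indep g0f0 f0_indep (c := fun k => M a k * M b k)) => h.
move/matrixP: (congrM h) => /(_ a b).
rewrite congr_diag_mxE mxE (negPf neq_ab) mulr0n => /esym sum0.
by rewrite -[X in _ = X]sum0; apply: eq_bigr => k _; rewrite mxE.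
Qed.

End Model.

Theorem lemma3 (R : realType) (p : nat)
  (W0 : 'M[R]_p) (d0 : 'rV[R]_p) (g0 : 'I_p -> nat -> R) (f0 : 'I_p -> R -> R)
  (W1 : 'M[R]_p) (d1 : 'rV[R]_p) (g1 : 'I_p -> nat -> R) (f1 : 'I_p -> R -> R) :
  model_param W0 d0 g0 f0 ->
  model_param W1 d1 g1 f1 ->
  same_law_Y W0 d0 g0 W1 d1 g1 ->
  zero_diag W1 ->
  strictly_lower W0 ->
  lin_indep_on_circle f0 ->
  lin_indep_on_circle f1 ->
  W0 = W1 /\ diag_mx d0 = diag_mx d1 /\
  (forall (j : 'I_p) (w : R), - pi <= w <= pi -> f0 j w = f1 j w).
Proof.
move=> [U0 [d0_gt0 g0P]] [U1 [d1_gt0 g1P]] law W1_diag W0_lower f0_indep _.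
have W0_diag := strictly_lower_zero_diag W0_lower.
pose M := unmix_mx W1 d1 *m mix_mx W0 d0.
have congrM h : diag_mx (\row_j g1 j h) = M *m diag_mx (\row_j g0 j h) *m M^T.
  apply: congr_transfer (unmix_mixK U1 d1_gt0) _.
  by rewrite -!covYE (same_law_covY law).
have MB0 : M *m unmix_mx W0 d0 = unmix_mx W1 d1.
  by rewrite -mulmxA (mulmx1C (unmix_mixK U0 d0_gt0)) mulmx1.
clearbody M.
have /diag_mxP[m Mm] : is_diag_mx M.
  apply: (col_disjoint_is_diag _ (strictly_lower_unmix_trig d0 W0_lower)).
  - exact: congr_autocov_col_disjoint (fun k => (g0P k).2) f0_indep congrM.
  - by move=> a; rewrite MB0 gt_eqF ?unmix_mx_diag_gt0.
have M1 : M = 1%:M.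
  rewrite Mm; apply: (pos_diag_congr_id (r := \row_j g0 j 0%N)) => [a|a|].
  - have := unmix_mx_diag_gt0 a W1_diag d1_gt0.
    by rewrite -MB0 Mm mul_diag_mx mxE pmulr_lgt0 ?unmix_mx_diag_gt0.
  - by rewrite mxE (g0P a).1.1 oner_neq0.
  - rewrite -Mm -congrM; congr diag_mx; apply/rowP => a.
    by rewrite !mxE (g0P a).1.1 (g1P a).1.1.
have [W01 d01] : W0 = W1 /\ d0 = d1 by apply: unmix_mx_inj; rewrite // -MB0 M1 mul1mx.
have g01 j : g0 j = g1 j.
  apply: funext => h; move/matrixP: (congrM h) => /(_ j j).
  by rewrite M1 mul1mx trmx1 mulmx1 !mxE eqxx !mulr1n.
split=> //; split; first by rewrite d01.
move=> j w w_in; apply: specdens_unique _ (g1P j).2 w_in.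
by rewrite -g01; exact: (g0P j).2.
Qed.
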